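(* Let $M$ be a magma satisfying $(xy)z = xx$, $x(yz) = xx$ and $xy = yx$ for all $x,y,z\in M$. Then $M$ satisfies $xy = zu$ for all $x,y,z,u\in M$ if and only if $M$ avoids the magma $Q$ on $\{0,1,2,3\}$ with Cayley table \[ \begin{array}{c|cccc} Q & 0 & 1 & 2 & 3 \\ \hline 0 & 0 & 0 & 0 & 0 \\ 1 & 0 & 0 & 3 & 0 \\ 2 & 0 & 3 & 0 & 0 \\ 3 & 0 & 0 & 0 & 0 \end{array}. \]
   Context: A magma is a nonempty set with a binary operation, written by juxtaposition. A magma $M$ avoids a magma $F$ if no submagma of $M$ is isomorphic to $F$. *)

From mathcomp Require Import all_boot.
Set Implicit Arguments. Unset Strict Implicit. Unset Printing Implicit Defensive.

Definition Qop (a b : 'I_4) : 'I_4 :=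
  inord (if ((val a == 1) && (val b == 2)) || ((val a == 2) && (val b == 1))
         then 3 else 0).

Definition is_submagma (M : Type) (op : M -> M -> M) (S : M -> Prop) : Prop :=
  (exists x, S x) /\ (forall x y, S x -> S y -> S (op x y)).

Definition submagma_iso_Q (M : Type) (op : M -> M -> M) (S : M -> Prop) : Prop :=
  exists f : 'I_4 -> M,
    [/\ (forall a, S (f a)),
        injective f,
        (forall x, S x -> exists a, f a = x) &
        (forall a b, f (Qop a b) = op (f a) (f b))].

Definition avoids_Q (M : Type) (op : M -> M -> M) : Prop :=
  ~ exists S : M -> Prop, is_submagma op S /\ submagma_iso_Q op S.

From mathcomp Require Import all_boot.
From Stdlib Require Classical_Prop.
Set Implicit Arguments. Unset Strict Implicit. Unset Printing Implicit Defensive.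

(* The identities force every product of a product, and every square, to be one
   element [e = a a]. So either all products equal [e], or some [a b <> e], and
   then [e, a, b, a b] are pairwise distinct and multiply exactly like
   [0, 1, 2, 3] in Q. Conversely Q itself has the two different products
   [0 0 = 0] and [1 2 = 3], so it cannot sit inside a magma with constant
   multiplication. *)

Lemma val_Qop (i j : 'I_4) :
  val (Qop i j) = if ((val i == 1) && (val j == 2)) || ((val i == 2) && (val j == 1))
                  then 3 else 0.
Proof. by rewrite /Qop /= inordK //; case: ifP. Qed.

Lemma Qop_nonconstant : Qop ord0 ord0 <> Qop (inord 1) (inord 2).
Proof. by move=> /(congr1 val); rewrite !val_Qop /= !inordK. Qed.

Definition Q_embedding (M : Type) (x0 x1 x2 x3 : M) (i : 'I_4) : M :=
  match val i with 0 => x0 | 1 => x1 | 2 => x2 | _ => x3 end.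

Lemma Q_embedding_inj (M : Type) (x0 x1 x2 x3 : M) :
  x0 <> x1 -> x0 <> x2 -> x0 <> x3 -> x1 <> x2 -> x1 <> x3 -> x2 <> x3 ->
  injective (Q_embedding x0 x1 x2 x3).
Proof.
move=> n01 n02 n03 n12 n13 n23.
move=> [[|[|[|[|i]]]] Hi] [[|[|[|[|j]]]] Hj] //; rewrite /Q_embedding /=;
  by [move=> _; apply: val_inj | move=> /esym | ].
Qed.

Section Embeddings.

Variables (M : Type) (op : M -> M -> M).

Lemma injective_Qhom_not_avoids_Q (f : 'I_4 -> M) :
  {morph f : i j / Qop i j >-> op i j} -> injective f -> ~ avoids_Q op.
Proof.
move=> f_hom f_inj; apply; exists (fun x => exists i, f i = x); split.
- split; first by exists (f ord0), ord0.
  by move=> _ _ [i <-] [j <-]; exists (Qop i j).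
- exists f; split=> // i; by exists i.
Qed.

Lemma const_op_avoids_Q : (forall x y z u, op x y = op z u) -> avoids_Q op.
Proof.
move=> op_const [S [_ [f [_ f_inj _ f_hom]]]]; apply: Qop_nonconstant.
by apply: f_inj; rewrite !f_hom; apply: op_const.
Qed.

End Embeddings.

Section SquareAbsorbingMagma.

Variables (M : Type) (op : M -> M -> M).
Hypothesis mul_mull : forall x y z, op (op x y) z = op x x.
Hypothesis mul_mulr : forall x y z, op x (op y z) = op x x.
Hypothesis mulC : forall x y, op x y = op y x.

Lemma mulxx_const x y : op x x = op y y.
Proof. by rewrite -(mul_mulr x y y) mulC mul_mull. Qed.

Lemma Q_embedding_hom (a b : M) :
  {morph Q_embedding (op a a) a b (op a b) : i j / Qop i j >-> op i j}.
Proof.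
move=> i j; rewrite /Q_embedding val_Qop.
case: i j => [[|[|[|[|i]]]] Hi] [[|[|[|[|j]]]] Hj] //=;
  by rewrite ?mul_mull ?mul_mulr ?(mulxx_const b a) ?(mulxx_const (op a a) a)
             ?(mulxx_const (op a b) a) ?(mulC b a).
Qed.

Lemma mul_neq_sqr_not_avoids_Q (a b : M) : op a b <> op a a -> ~ avoids_Q op.
Proof.
move=> ab_neq; apply: (injective_Qhom_not_avoids_Q (Q_embedding_hom a b)).
apply: Q_embedding_inj => eq; apply: ab_neq.
- by rewrite -{1}eq mul_mull.
- by rewrite -eq mul_mulr.
- by rewrite eq.
- by rewrite -eq.
- by rewrite {1}eq mul_mull.
- by rewrite {1}eq mul_mulr.
Qed.

Lemma avoids_Q_mul_sqr : avoids_Q op -> forall a b, op a b = op a a.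
Proof.
move=> avQ a b; apply: Classical_Prop.NNPP => ab_neq.
exact: (mul_neq_sqr_not_avoids_Q ab_neq).
Qed.

End SquareAbsorbingMagma.

Theorem mainTheorem4 (M : Type) (op : M -> M -> M) (ne : inhabited M)
  (h1 : forall x y z, op (op x y) z = op x x)
  (h2 : forall x y z, op x (op y z) = op x x)
  (h3 : forall x y, op x y = op y x) :
  (forall x y z u, op x y = op z u) <-> avoids_Q op.
Proof.
split; first exact: const_op_avoids_Q.
move=> avQ x y z u.
by rewrite !(avoids_Q_mul_sqr h1 h2 h3 avQ) (mulxx_const h1 h2 h3 x z).
Qed.
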